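(* Let $T$ be an invertible ergodic probability preserving transformation of a standard probability space $(X,\mathcal B,m)$, and let $G$ be an Abelian locally compact second countable group with a topology-generating norm $\|\cdot\|$. Let $g\in G$, let $(\alpha_k)_{k\ge1}$ be measurable partitions of $X$ which approximately generate $\mathcal B$, let $N_k\in\mathbb N$ with $N_k\uparrow\infty$, and let $\varepsilon_k>0$ with $\sum_k\varepsilon_k<\infty$. Suppose that for each $k\in\mathbb N$, $f_k:X\to G$ is measurable, $\sum_{j=1}^k(f_j\circ T-f_j)$ satisfies $\mathrm{EVC}^T(N(g,\varepsilon_k),\varepsilon_k,\alpha_k,N_k)$, and (for $k\ge2$) $m([\|f_k\circ T-f_k\|\ge \varepsilon_{k-1}/N_{k-1}])\le \varepsilon_{k-1}^2/N_{k-1}$. Then $\sum_{k=1}^\infty\|f_k\circ T-f_k\|<\infty$ a.e., and $g\in E\big(\sum_{k=1}^\infty(f_k\circ T-f_k)\big)$.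
   Context: $N(g,\varepsilon)=\{h\in G:\|h-g\|<\varepsilon\}$. For measurable $\varphi:X\to G$, $\varphi_n$ denotes the cocycle ($\varphi_0=0$, $\varphi_n=\sum_{j=0}^{n-1}\varphi\circ T^j$ for $n\ge1$, $\varphi_{-n}=-\varphi_n\circ T^{-n}$). The essential values are $E(\varphi)=\{a\in G:\forall A\in\mathcal B$ with $m(A)>0$, $\forall$ open $U\ni a$, $\exists n\ge1$ with $m(A\cap T^{-n}A\cap[\varphi_n\in U])>0\}$. A partial transformation $R$ in $[T]_+$ is a measure preserving bijection $R:\mathrm{dom}(R)\to\mathrm{Im}(R)$ between measurable subsets of $X$ of the form $Rx=T^{\phi^{(R)}(x)}x$ with measurable $\phi^{(R)}:\mathrm{dom}(R)\to\{1,2,\dots\}$; set $\varphi_R(x)=\varphi_{\phi^{(R)}(x)}(x)$. For a measurable partition $\alpha$, $U\subset G$, $\varepsilon>0$, $N\ge1$: $\varphi$ satisfies $\mathrm{EVC}^T(U,\varepsilon,\alpha,N)$ if the union of those $a\in\alpha$ for which there is $R\in[T]_+$ with $\phi^{(R)}\le N$, $\mathrm{dom}(R),\mathrm{Im}(R)\subset a$, $\varphi_R\in U$ on $\mathrm{dom}(R)$ and $m(a\setminus\mathrm{dom}(R))<\varepsilon m(a)$, has measure $>1-\varepsilon$. Partitions $(\alpha_k)$ approximately generate $\mathcal B$ if for all $B\in\mathcal B$ and $\varepsilon>0$ there is $k_0$ such that for all $k\ge k_0$ some $A_k$ in the algebra generated by $\alpha_k$ has $m(B\triangle A_k)<\varepsilon$.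 *)

From HB Require Import structures.
From mathcomp Require Import all_boot all_order all_algebra.
From mathcomp Require Import all_classical all_reals all_analysis.
Set Implicit Arguments. Unset Strict Implicit. Unset Printing Implicit Defensive.
Import Order.TTheory GRing.Theory Num.Theory.
Local Open Scope classical_set_scope.
Local Open Scope ring_scope.

Definition is_group_norm (R : realType) (G : zmodType) (nrm : G -> R) : Prop :=
  [/\ forall x, 0 <= nrm x,
      forall x, nrm x = 0 <-> x = 0,
      forall x, nrm (- x) = nrm x &
      forall x y, nrm (x + y) <= nrm x + nrm y].

Definition nball (R : realType) (G : zmodType) (nrm : G -> R) (g : G) (e : R)
  : set G := [set h | nrm (h - g) < e].

Definition nopen (R : realType) (G : zmodType) (nrm : G -> R) (U : set G) : Prop :=
  forall x, U x -> exists2 e, 0 < e & nball nrm x e `<=` U.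

Definition ncompact (R : realType) (G : zmodType) (nrm : G -> R) (K : set G)
  : Prop :=
  forall (I : Type) (V : I -> set G), (forall i, nopen nrm (V i)) ->
    K `<=` \bigcup_i V i ->
    exists J : set I, finite_set J /\ K `<=` \bigcup_(i in J) V i.

Definition nlocally_compact (R : realType) (G : zmodType) (nrm : G -> R) : Prop :=
  forall x : G, exists2 K, ncompact nrm K &
    exists2 e, 0 < e & nball nrm x e `<=` K.

Definition nsecond_countable (R : realType) (G : zmodType) (nrm : G -> R)
  : Prop :=
  exists B : nat -> set G, (forall n, nopen nrm (B n)) /\
    forall U, nopen nrm U -> forall x, U x -> exists n, B n x /\ B n `<=` U.

Definition lcsc_normed_group (R : realType) (G : zmodType) (nrm : G -> R)
  : Prop :=
  [/\ is_group_norm nrm, nlocally_compact nrm & nsecond_countable nrm].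

Definition nmeasurable d (X : measurableType d) (R : realType) (G : zmodType)
  (nrm : G -> R) (phi : X -> G) : Prop :=
  forall U, nopen nrm U -> measurable (phi @^-1` U).

Definition nconverges (R : realType) (G : zmodType) (nrm : G -> R)
  (u : nat -> G) (l : G) : Prop :=
  forall e, 0 < e -> exists n0, forall n, (n0 <= n)%N -> nrm (u n - l) < e.

(* standard Borel space: Borel isomorphic to a Borel subset of the reals *)
Definition standard_borel d (X : measurableType d) (R : realType) : Prop :=
  exists f : X -> R, [/\ injective f, measurable_fun setT f &
    forall A, measurable A -> measurable (f @` A)].

Definition invertible_mpt d (X : measurableType d) (R : realType)
  (m : {measure set X -> \bar R}) (T : X -> X) : Prop :=
  [/\ measurable_fun setT T,
      (exists Tinv : X -> X, [/\ measurable_fun setT Tinv, cancel T Tinv &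
                                 cancel Tinv T]) &
      forall A, measurable A -> m (T @^-1` A) = m A].

Definition ergodic d (X : measurableType d) (R : realType)
  (m : {measure set X -> \bar R}) (T : X -> X) : Prop :=
  forall A, measurable A -> T @^-1` A = A -> m A = 0%E \/ m A = 1%E.

Definition cocycle (X : Type) (G : zmodType) (T : X -> X) (phi : X -> G)
  (n : nat) (x : X) : G := \sum_(j < n) phi (iter j T x).

Definition essential_value d (X : measurableType d) (R : realType)
  (m : {measure set X -> \bar R}) (T : X -> X) (G : zmodType) (nrm : G -> R)
  (phi : X -> G) (a : G) : Prop :=
  forall A, measurable A -> (0 < m A)%E ->
  forall U, nopen nrm U -> U a ->
  exists2 n, (1 <= n)%N &
    (0 < m (A `&` (iter n T @^-1` A) `&` [set x | U (cocycle T phi n x)]))%E.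

Definition ptmap (X : Type) (T : X -> X) (psi : X -> nat) (x : X) : X :=
  iter (psi x) T x.

(* (D, psi) describes a partial transformation R in [T]_+ with dom(R) = D,
   phi^(R) = psi (on D) and Im(R) = R @` D *)
Definition partial_transf d (X : measurableType d) (R : realType)
  (m : {measure set X -> \bar R}) (T : X -> X) (D : set X) (psi : X -> nat)
  : Prop :=
  [/\ measurable D,
      forall n, measurable (D `&` psi @^-1` [set n]),
      forall x, D x -> (1 <= psi x)%N,
      forall x y, D x -> D y -> ptmap T psi x = ptmap T psi y -> x = y &
      forall B, measurable B -> B `<=` D ->
        measurable (ptmap T psi @` B) /\ m (ptmap T psi @` B) = m B].

(* measurable (countable) partitions, indexed by nat (empty atoms allowed) *)
Definition mpartition d (X : measurableType d) (alpha : nat -> set X) : Prop :=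
  [/\ forall i, measurable (alpha i),
      forall i j, i <> j -> alpha i `&` alpha j = set0 &
      \bigcup_i alpha i = setT].

Definition EVC d (X : measurableType d) (R : realType)
  (m : {measure set X -> \bar R}) (T : X -> X) (G : zmodType)
  (phi : X -> G) (U : set G) (eps : R) (alpha : nat -> set X) (N : nat)
  : Prop :=
  let good i := exists D psi, partial_transf m T D psi /\
      (forall x, D x -> (psi x <= N)%N) /\
      D `<=` alpha i /\ ptmap T psi @` D `<=` alpha i /\
      (forall x, D x -> U (cocycle T phi (psi x) x)) /\
      (m (alpha i `\` D) < eps%:E * m (alpha i))%E in
  ((1 - eps)%:E < m (\bigcup_(i in good) alpha i))%E.

Definition partition_algebra (X : Type) (alpha : nat -> set X) (A : set X)
  : Prop :=
  exists I : set nat, (finite_set I \/ finite_set (~` I)) /\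
                      A = \bigcup_(i in I) alpha i.

Definition approx_generate d (X : measurableType d) (R : realType)
  (m : {measure set X -> \bar R}) (alpha : nat -> nat -> set X) : Prop :=
  forall B, measurable B -> forall e : R, 0 < e ->
  exists k0, forall k, (k0 <= k)%N ->
    exists A, partition_algebra (alpha k) A /\
              (m ((B `\` A) `|` (A `\` B)) < e%:E)%E.

(* Borel--Cantelli applied to the sets [|f_(k+1) o T - f_(k+1)| >= eps_k / N_k],
   of summable measures [eps_k^2 / N_k], shows that almost every [x] eventually
   satisfies [|f_(k+1) (T x) - f_(k+1) x| < eps_k / N_k]; so the series
   converges absolutely a.e., and its partial sums converge because a locally
   compact normed group is complete.  Given [A] of positive measure and a
   neighbourhood of [g], choose [k] with [sum_(j >= k) eps_j] small.  Some good
   atom of [alpha_k] lies almost inside [A], and the partial transformation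
   [R] that EVC provides there sends a set of positive measure in [A] back to
   [A] in at most [N_k] steps, with cocycle of the [k]-th partial sum within
   [eps_k] of [g].  Off an exceptional set, each of the at most [N_k] terms of
   the cocycle of the limit is within [(sum_(j >= k) eps_j) / N_k] of the
   corresponding term for the [k]-th partial sum, so the cocycle of the limit
   lands near [g] as well. *)

From HB Require Import structures.
From mathcomp Require Import all_boot all_order all_algebra.
From mathcomp Require Import all_classical all_reals all_analysis.
From mathcomp Require Import zify lra.
Import Order.TTheory GRing.Theory Num.Theory.
Local Open Scope classical_set_scope.
Local Open Scope ring_scope.
Set Implicit Arguments. Unset Strict Implicit. Unset Printing Implicit Defensive.

Section GroupNorm.
Context (R : realType) (G : zmodType) (nrm : G -> R).
Hypothesis nrm_norm : is_group_norm nrm.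

Lemma nrm_ge0 x : 0 <= nrm x. Proof. by case: nrm_norm. Qed.
Lemma nrm0 : nrm 0 = 0. Proof. by case: nrm_norm => _ H _ _; apply/H. Qed.
Lemma nrmN x : nrm (- x) = nrm x. Proof. by case: nrm_norm. Qed.
Lemma nrmD x y : nrm (x + y) <= nrm x + nrm y. Proof. by case: nrm_norm. Qed.

Lemma nrm_distC x y : nrm (x - y) = nrm (y - x).
Proof. by rewrite -nrmN opprB. Qed.

Lemma nrm_distD x y z : nrm (x - z) <= nrm (x - y) + nrm (y - z).
Proof. by rewrite -[x - z](subrKA y) nrmD. Qed.

Lemma nrm_sum (I : Type) (s : seq I) (F : I -> G) :
  nrm (\sum_(i <- s) F i) <= \sum_(i <- s) nrm (F i).
Proof.
elim: s => [|a s IH]; first by rewrite !big_nil nrm0.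
by rewrite !big_cons (le_trans (nrmD _ _)) ?lerD2l.
Qed.

Lemma nball_center y r : 0 < r -> nball nrm y r y.
Proof. by rewrite /nball /= subrr nrm0. Qed.

Lemma nopen_nball y r : nopen nrm (nball nrm y r).
Proof.
move=> x /= hx; exists (r - nrm (x - y)); first by rewrite subr_gt0.
move=> z; rewrite /nball /= ltrBrDr => hz.
exact: le_lt_trans (nrm_distD z x y) hz.
Qed.

End GroupNorm.
Arguments nopen_nball {R G nrm} nrm_norm y r.
Arguments nball_center {R G nrm} nrm_norm y {r}.

Lemma measurable_fun_iter d (X : measurableType d) (F : X -> X) n :
  measurable_fun setT F -> measurable_fun setT (iter n F).
Proof.
move=> mF; elim: n => [|n IH]; first exact: measurable_id.
by rewrite (_ : iter n.+1 F = F \o iter n F); [exact: measurableT_comp|].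
Qed.

Section NMeasurable.
Context d (X : measurableType d) (R : realType) (G : zmodType) (nrm : G -> R).
Hypotheses (nrm_norm : is_group_norm nrm) (nrm_sc : nsecond_countable nrm).
Implicit Types a b : X -> G.

Lemma nmeasurable_cst (c : G) : nmeasurable nrm (fun _ : X => c).
Proof.
move=> U _; have [Uc|nUc] := pselect (U c).
  by rewrite (_ : _ @^-1` U = setT); [exact: measurableT|apply/seteqP; split].
by rewrite (_ : _ @^-1` U = set0); [exact: measurable0|apply/seteqP; split].
Qed.

Lemma nmeasurable_comp (F : X -> X) a : measurable_fun setT F ->
  nmeasurable nrm a -> nmeasurable nrm (a \o F).
Proof. by move=> mF ma U oU; have := mF measurableT _ (ma U oU); rewrite setTI. Qed.

(* A countable base reduces [a + b \in U] to countably many rectangles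
   [a \in B n, b \in B k] with [B n + B k <= U]. *)
Lemma nmeasurableD a b : nmeasurable nrm a -> nmeasurable nrm b ->
  nmeasurable nrm (a \+ b).
Proof.
move=> ma mb U oU; have [B [oB HB]] := nrm_sc.
pose P n k := forall u v, B n u -> B k v -> U (u + v).
have -> : (a \+ b) @^-1` U =
    \bigcup_n \bigcup_(k in [set k | P n k]) (a @^-1` B n `&` b @^-1` B k).
  apply/seteqP; split => [x /= Ux|x [n _ [k Pnk [/= Bn Bk]]]]; last exact: Pnk.
  have [e e0 He] := oU _ Ux; have e20 : 0 < e / 2 by rewrite divr_gt0.
  have near y := HB _ (nopen_nball nrm_norm y _) _ (nball_center nrm_norm y e20).
  have [[n [Bn Bna]] [k [Bk Bkb]]] := (near (a x), near (b x)).
  exists n => //; exists k => // u v /Bna hu /Bkb hv; apply: He.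
  rewrite /nball /= opprD addrACA (le_lt_trans (nrmD nrm_norm _ _)) //.
  by rewrite [e]splitr ltrD.
apply: bigcup_measurable => n _; apply: bigcup_measurable => k _.
exact: measurableI (ma _ (oB n)) (mb _ (oB k)).
Qed.

Lemma nmeasurableN a : nmeasurable nrm a -> nmeasurable nrm (\- a).
Proof.
move=> ma U oU; apply: (ma [set y | U (- y)]) => y /oU [e e0 He].
by exists e => // z hz; apply: He; rewrite /nball /= -opprD nrmN.
Qed.

Lemma nmeasurableB a b : nmeasurable nrm a -> nmeasurable nrm b ->
  nmeasurable nrm (a \- b).
Proof. by move=> ma mb; apply: nmeasurableD => //; exact: nmeasurableN. Qed.

Lemma nmeasurable_sum n (F : nat -> X -> G) : (forall i, nmeasurable nrm (F i)) ->
  nmeasurable nrm (fun x => \sum_(i < n) F i x).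
Proof.
move=> mF; elim: n => [|n IH].
  by under eq_fun do rewrite big_ord0; exact: nmeasurable_cst.
by under eq_fun do rewrite big_ord_recr; exact: nmeasurableD.
Qed.

Lemma nmeasurable_cocycle (F : X -> X) (phi : X -> G) n :
  measurable_fun setT F -> nmeasurable nrm phi -> nmeasurable nrm (cocycle F phi n).
Proof.
move=> mF mphi.
have mphiF j : nmeasurable nrm (fun x => phi (iter j F x)).
  exact: nmeasurable_comp (measurable_fun_iter j mF) mphi.
exact (nmeasurable_sum n mphiF).
Qed.

Lemma measurable_nrm_ge a c : nmeasurable nrm a -> measurable [set x | c <= nrm (a x)].
Proof.
move=> ma; rewrite (_ : [set x | _] = ~` (a @^-1` nball nrm 0 c)).
  exact/measurableC/ma/(nopen_nball nrm_norm).
by apply/seteqP; split => x /=; rewrite /nball /= subr0 leNgt => /negP.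
Qed.

End NMeasurable.

Definition ncauchy (R : realType) (G : zmodType) (nrm : G -> R) (u : nat -> G) :=
  forall e, 0 < e -> exists n0, forall p q, (n0 <= p <= q)%N -> nrm (u q - u p) < e.

Section Completeness.
Context (R : realType) (G : zmodType) (nrm : G -> R).
Hypothesis nrm_norm : is_group_norm nrm.

Lemma ncauchy_away (t : nat -> G) y : ncauchy nrm t -> ~ nconverges nrm t y ->
  exists2 r, 0 < r & exists M, forall n, (M <= n)%N -> r <= nrm (t n - y).
Proof.
move=> ct nty.
have [e e0 often] : exists2 e, 0 < e &
    forall n0, exists2 n, (n0 <= n)%N & e <= nrm (t n - y).
  apply: contrapT => nofar; apply: nty => e e0; apply: contrapT => nonear.
  apply: nofar; exists e => // n0; apply: contrapT => nofar'; apply: nonear.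
  by exists n0 => n n0n; rewrite ltNge; apply/negP => ?; apply: nofar'; exists n.
have [M HM] := ct _ (divr_gt0 e0 (ltr0n _ 2)).
exists (e / 2); first by rewrite divr_gt0.
exists M => n Mn; have [n' nn' en'] := often n.
have := HM n n'; rewrite Mn nn' => /(_ isT) tnn'.
have := nrm_distD nrm_norm (t n') (t n) y; lra.
Qed.

Lemma ncompact_ncauchy_cvg (K : set G) (t : nat -> G) : ncompact nrm K ->
  (forall n, K (t n)) -> ncauchy nrm t -> exists y, nconverges nrm t y.
Proof.
move=> cK tK ct; apply: contrapT => nocvg.
have away y : exists p : R * nat,
    0 < p.1 /\ forall n, (p.2 <= n)%N -> p.1 <= nrm (t n - y).
  have [r r0 [M HM]] := ncauchy_away ct (fun ty => nocvg (ex_intro _ y ty)).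
  by exists (r, M).
have [rM HrM] := choice away.
have Kcover : K `<=` \bigcup_y nball nrm y (rM y).1.
  by move=> y _; exists y => //; case: (HrM y) => r0 _; exact: nball_center.
have [J [fJ JK]] := cK G _ (fun y => nopen_nball nrm_norm y _) Kcover.
pose M := (\max_(y <- finmap.enum_fset (fset_set J)) (rM y).2)%N.
have [y Jy tMy] := JK _ (tK M).
have : ((rM y).2 <= M)%N.
  by apply: (@leq_bigmax_seq _ _ xpredT (fun y => (rM y).2)); rewrite ?in_fset_set ?inE.
by move/(proj2 (HrM y)); rewrite leNgt => /negP; apply.
Qed.

(* Cauchy sequences are eventually trapped in a compact neighbourhood of one
   of their terms. *)
Lemma ncauchy_nconverges (u : nat -> G) : nlocally_compact nrm ->
  ncauchy nrm u -> exists l, nconverges nrm u l.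
Proof.
move=> lc cu; have [K cK [r r0 K0]] := lc 0; have [n0 Hn0] := cu _ r0.
pose t n := u (n0 + n)%N - u n0.
have tK n : K (t n) by apply: K0; rewrite /nball /= subr0 Hn0 // leqnn leq_addr.
have ct : ncauchy nrm t.
  move=> e e0; have [n1 Hn1] := cu e e0; exists n1 => p q /andP[n1p pq].
  rewrite /t opprB addrA subrK Hn1 //; apply/andP; split; lia.
have [y ty] := ncompact_ncauchy_cvg cK tK ct.
exists (y + u n0) => e e0; have [M HM] := ty e e0; exists (n0 + M)%N => n n0Mn.
have := HM (n - n0)%N; rewrite /t subnKC; last lia.
by rewrite opprD addrA addrAC; apply; lia.
Qed.

(* Open subsets of [U] at distance [r] from its complement; they exhaust the
   open set [U] as [r] tends to [0]. *)
Definition nshrink (U : set G) (r : R) : set G :=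
  [set z | exists2 y, nball nrm y (r + r) `<=` U & nrm (z - y) < r].

Lemma nopen_nshrink U r : nopen nrm (nshrink U r).
Proof.
move=> z [y yU zy]; exists (r - nrm (z - y)); first by rewrite subr_gt0.
move=> z'; rewrite /nball /= ltrBrDr => z'z; exists y => //.
exact: le_lt_trans (nrm_distD nrm_norm z' z y) z'z.
Qed.

Lemma nconverges_nshrinkP (U : set G) (u : nat -> G) l : nopen nrm U ->
  nconverges nrm u l ->
  U l <-> exists j n, forall k, (n <= k)%N -> nshrink U j.+1%:R^-1 (u k).
Proof.
move=> oU ul.
have r0 j : 0 < j.+1%:R^-1 :> R by rewrite invr_gt0 ltr0n.
split => [Ul|[j [n Hjn]]].
  have [e e0 He] := oU _ Ul.
  have [j je] : exists j : nat, j.+1%:R^-1 < e / 2.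
    have := near_infty_natSinv_lt (PosNum (divr_gt0 e0 (ltr0n R 2))).
    by case=> j _ Hj; exists j; apply: Hj => /=.
  have [n Hn] := ul _ (r0 j).
  exists j, n => k nk; exists l; last exact: Hn.
  move=> z /= zl; apply: He; rewrite /nball /= (lt_le_trans zl) // [e]splitr.
  by rewrite lerD // ltW.
have [n1 Hn1] := ul _ (r0 j).
have [y yU uy] := Hjn (maxn n n1) (leq_maxl _ _).
apply: yU; rewrite /nball /= (le_lt_trans (nrm_distD nrm_norm _ (u (maxn n n1)) _)) //.
by rewrite ltrD // nrm_distC // Hn1 // leq_maxr.
Qed.

End Completeness.

Section LimitMeasurable.
Context d (X : measurableType d) (R : realType) (G : zmodType) (nrm : G -> R).
Hypothesis nrm_norm : is_group_norm nrm.

Lemma nmeasurable_lim (u : nat -> X -> G) (L : X -> G) (Z : set X) :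
  (forall n, nmeasurable nrm (u n)) -> measurable Z ->
  (forall x, ~ Z x -> nconverges nrm (u^~ x) (L x)) ->
  nmeasurable nrm (fun x => if pselect (Z x) then 0 else L x).
Proof.
move=> mu mZ uL U oU.
pose S j := nshrink nrm U j.+1%:R^-1.
have -> : (fun x => if pselect (Z x) then 0 else L x) @^-1` U =
    (Z `&` [set _ | U 0]) `|` (~` Z `&`
      \bigcup_j \bigcup_n \bigcap_(k in [set k | (n <= k)%N]) (u k @^-1` S j)).
  apply/seteqP; split => x /=; case: pselect => Zx /=.
  - by left.
  - move=> /(nconverges_nshrinkP nrm_norm oU (uL x Zx)) [j [n Hjn]].
    by right; split => //; exists j => //; exists n => // k; exact: Hjn.
  - by case=> [[]|[]].
  - case=> [[]|[_ [j _ [n _ Hjn]]]] //.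
    by apply/(nconverges_nshrinkP nrm_norm oU (uL x Zx)); exists j, n => k /Hjn.
apply: measurableU; apply: measurableI => //.
- exact: (nmeasurable_cst X 0 oU).
- exact: measurableC.
apply: bigcup_measurable => j _; apply: bigcup_measurable => n _.
apply: bigcap_measurableType => k _; exact/mu/nopen_nshrink.
Qed.

End LimitMeasurable.

Section NonnegSeries.
Context (R : realType) (a : nat -> R).
Hypotheses (a_ge0 : forall k, 0 <= a k) (a_fin : (\sum_(0 <= k <oo) (a k)%:E < +oo)%E).

Lemma nneseries_le_bound n (B : R) : (forall M, \sum_(n <= k < M) a k <= B) ->
  (\sum_(n <= k <oo) (a k)%:E <= B%:E)%E.
Proof.
move=> aB; apply: lime_le; first by apply: is_cvg_nneseries => k _ _; rewrite lee_fin.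
by apply: nearW => M; rewrite sumEFin lee_fin.
Qed.

Lemma sum_le_fine_nneseries n M :
  \sum_(n <= k < M) a k <= fine (\sum_(0 <= k <oo) (a k)%:E).
Proof.
rewrite -lee_fin fineK ?ge0_fin_numE //; last first.
  by apply: nneseries_ge0 => k _ _; rewrite lee_fin.
apply: le_trans (nneseries_lim_ge M _); last by move=> k _ _; rewrite lee_fin.
rewrite sumEFin lee_fin; have [nM|Mn] := leqP n M; last first.
  by rewrite big_geq ?sumr_ge0 // ltnW.
by rewrite [X in _ <= X](big_cat_nat (leq0n n) nM) lerDr sumr_ge0.
Qed.

Lemma nneseries_tail_lt e : 0 < e ->
  exists n, forall p q, (n <= p)%N -> \sum_(p <= k < q) a k < e.
Proof.
move=> e0.
have tail0 := nneseries_tail_cvg a_fin (fun k _ => a_ge0 k : (0 <= (a k)%:E)%E).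
have [n _ Hn] := tail0 _ (open_ereal_lt' (e0 : (0%:E < e%:E)%E)).
exists n => p q np; rewrite -lte_fin -sumEFin.
apply: le_lt_trans (Hn p np); apply: nneseries_lim_ge => k _ _; exact: a_ge0.
Qed.

End NonnegSeries.

Section MeasurePreserving.
Context d (X : measurableType d) (R : realType).
Context (m : {finite_measure set X -> \bar R}) (T : X -> X).
Hypotheses (mT : measurable_fun setT T)
  (mpT : forall A, measurable A -> m (T @^-1` A) = m A).
Local Open Scope ereal_scope.

Lemma finite_measureE (A : set X) : measurable A -> m A = (fine (m A))%:E.
Proof. by move=> mA; rewrite fineK // fin_num_measure. Qed.

Lemma measurable_iter_preimage i A : measurable A -> measurable (iter i T @^-1` A).
Proof.
by move=> mA; have := measurable_fun_iter i mT measurableT mA; rewrite setTI.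
Qed.

Lemma measure_iter_preimage i A : measurable A -> m (iter i T @^-1` A) = m A.
Proof.
elim: i A => [//|i IH] A mA.
have mTA : measurable (T @^-1` A) by rewrite -[_ @^-1` _]setTI; exact: mT.
by rewrite (_ : _ @^-1` A = iter i T @^-1` (T @^-1` A)) // IH ?mpT.
Qed.

Lemma measure_orbit_null Z : measurable Z -> m Z = 0 ->
  m (\bigcup_i (iter i T @^-1` Z)) = 0.
Proof.
move=> mZ Z0; apply/negligibleP.
  by apply: bigcup_measurable => i _; exact: measurable_iter_preimage.
apply: negligible_bigcup => i; apply/negligibleP; first exact: measurable_iter_preimage.
exact: etrans (measure_iter_preimage i mZ) Z0.
Qed.

Lemma measure_orbit_segment_le W n (c : R) : measurable W -> m W <= c%:E ->
  m (\bigcup_(i in `I_n) (iter i T @^-1` W)) <= (c *+ n)%:E.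
Proof.
move=> mW Wc; rewrite bigcup_mkord.
apply: le_trans (Boole_inequality m (fun i _ => measurable_iter_preimage i mW)) _.
apply: le_trans (_ : \sum_(i < n) c%:E <= _).
  by apply: lee_sum => i _; move: Wc; rewrite -(measure_iter_preimage i mW).
by rewrite sumEFin sumr_const card_ord.
Qed.

Section PartialTransformation.
Variables (D : set X) (psi : X -> nat).
Hypothesis ptD : partial_transf m T D psi.

Lemma measurable_ptmap_preimage S : measurable S ->
  measurable (D `&` ptmap T psi @^-1` S).
Proof.
have [mD mDpsi _ _ _] := ptD => mS.
have -> : D `&` ptmap T psi @^-1` S =
    \bigcup_n ((D `&` psi @^-1` [set n]) `&` (iter n T @^-1` S)).
  apply/seteqP; split => [x [Dx Sx]|x [n _ [[Dx /= <-] Sx]]]; last by split.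
  by exists (psi x).
apply: bigcup_measurable => n _; apply: measurableI => //.
exact: measurable_iter_preimage.
Qed.

Lemma measure_ptmap_preimage_le S : measurable S ->
  m (D `&` ptmap T psi @^-1` S) <= m S.
Proof.
move=> mS; have [_ _ _ _ ptm] := ptD.
have [mRS <-] := ptm _ (measurable_ptmap_preimage mS) (@subIsetl _ _ _).
by apply: le_measure; rewrite ?inE // => _ [x [_ Sx] <-].
Qed.

Lemma measurable_ptransf_level Y n : measurable Y -> Y `<=` D ->
  measurable (Y `&` psi @^-1` [set n]).
Proof.
move=> mY YD; rewrite -(setIidl YD) -setIA.
by apply: measurableI => //; case: ptD.
Qed.

Lemma ptransf_level_gt0 Y : measurable Y -> Y `<=` D -> 0 < m Y ->
  exists2 n, (0 < n)%N & 0 < m (Y `&` psi @^-1` [set n]).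
Proof.
move=> mY YD Y0; have [_ mDpsi psi_gt0 _ _] := ptD.
apply: contrapT => /forall2NP Yn0.
have : m Y <= \sum_(n <oo) m (Y `&` psi @^-1` [set n]).
  apply: measure_sigma_subadditive => // [n|x Yx]; last by exists (psi x).
  exact: measurable_ptransf_level.
rewrite eseries0 => [|n _ _]; first by rewrite leNgt Y0.
have [->|n0] := posnP n.
  rewrite (_ : _ `&` _ = set0) ?measure0 //.
  apply/seteqP; split => // x [/YD Dx /= psi0].
  by have := psi_gt0 x Dx; rewrite psi0.
apply/eqP; rewrite eq_le measure_ge0 andbT leNgt; apply/negP.
by case: (Yn0 n) => //; rewrite lt0n n0.
Qed.

Definition return_set (A B : set X) := (A `&` (D `&` ptmap T psi @^-1` A)) `\` B.

Lemma measurable_return_set A B : measurable A -> measurable B ->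
  measurable (return_set A B).
Proof.
move=> mA mB; apply: measurableD => //; apply: measurableI => //.
exact: measurable_ptmap_preimage.
Qed.

Lemma measure_le_return_set (a A B : set X) : measurable a -> measurable A ->
  measurable B -> ptmap T psi @` D `<=` a ->
  m a <= m (a `\` D) + m (a `\` A) + m (a `&` B) + m (a `\` A) + m (return_set A B).
Proof.
move=> ma mA mB RDa; have [mD _ _ _ _] := ptD.
have maD := measurableD ma mD; have maA := measurableD ma mA.
have maB := measurableI _ _ ma mB; have mRaA := measurable_ptmap_preimage maA.
have mU2 := measurableU _ _ maD maA; have mU3 := measurableU _ _ mU2 maB.
have mU4 := measurableU _ _ mU3 mRaA; have mY := measurable_return_set mA mB.
have cover : a `<=` (a `\` D) `|` (a `\` A) `|` (a `&` B) `|`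
    (D `&` ptmap T psi @^-1` (a `\` A)) `|` return_set A B.
  move=> x ax; have [Dx|] := pselect (D x); last by do 4 left.
  have [Ax|] := pselect (A x); last by do 3 left; right.
  have [Bx|nBx] := pselect (B x); first by do 2 left; right.
  have aRx : a (ptmap T psi x) by apply: RDa; exists x.
  by have [ARx|] := pselect (A (ptmap T psi x)); [right|left; right].
apply: le_trans (le_measure m (mem_set ma) _ cover) _.
  by rewrite inE; exact: measurableU.
apply: le_trans (measureU2 m mU4 mY) (leeD2r _ _).
apply: le_trans (measureU2 m mU3 mRaA) (leeD _ (measure_ptmap_preimage_le maA)).
apply: le_trans (measureU2 m mU2 maB) (leeD2r _ _).
exact: measureU2.
Qed.

(* By [measure_le_return_set], the return set carries at least
   [(1 - e) m a - 2 m (a \ A) - m (a & B) > 0]; one level of [psi] inside it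
   has positive measure. *)
Lemma ptransf_return_level (a A B : set X) (e : R) :
  measurable a -> measurable A -> measurable B ->
  ptmap T psi @` D `<=` a -> m (a `\` D) < e%:E * m a -> (e <= 1/2)%R ->
  4%:E * (m (a `\` A) + m (a `&` B)) < m a ->
  exists n (Y : set X), [/\ (0 < n)%N, measurable Y, 0 < m Y &
    Y `<=` [set x | [/\ D x, psi x = n, A x, A (iter n T x) & ~ B x]]].
Proof.
move=> ma mA mB RDa aD e12 aAB; have [mD _ _ _ _] := ptD.
have mY := measurable_return_set mA mB.
have YD : return_set A B `<=` D by move=> x [[_ []]].
suff /(ptransf_level_gt0 mY YD) [n n0 Yn0] : 0 < m (return_set A B).
  exists n, (return_set A B `&` psi @^-1` [set n]); split => //.
    exact: measurable_ptransf_level.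
  by move=> x [[[Ax [Dx ARx]] nBx] /= psin]; split => //; rewrite -psin.
have cover_le := measure_le_return_set ma mA mB RDa.
have x0 : (0 <= fine (m (a `\` A)))%R by apply/fine_ge0/measure_ge0.
have y0 : (0 <= fine (m (a `&` B)))%R by apply/fine_ge0/measure_ge0.
have ea : (e * fine (m a) <= 1 / 2 * fine (m a))%R.
  by rewrite ler_wpM2r // fine_ge0 // measure_ge0.
move: cover_le aD aAB; rewrite (finite_measureE ma) (finite_measureE (measurableD ma mD)).
rewrite (finite_measureE (measurableD ma mA)) (finite_measureE (measurableI _ _ ma mB)).
rewrite (finite_measureE mY) -!EFinD -!EFinM !lee_fin !lte_fin; lra.
Qed.

End PartialTransformation.
End MeasurePreserving.

Section DenseAtom.
Context d (X : measurableType d) (R : realType) (m : probability X R).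
Local Open Scope ereal_scope.

Lemma measure_bigcup_dominated (F : nat -> set X) (P : set nat) (A B : set X) (k : R) :
  (0 <= k)%R -> (forall i, measurable (F i)) -> trivIset P F ->
  measurable A -> measurable B ->
  (forall i, P i -> m (F i) <= k%:E * (m (F i `\` A) + m (F i `&` B))) ->
  m (\bigcup_(i in P) F i) <= k%:E * (m ((\bigcup_(i in P) F i) `\` A) + m B).
Proof.
move=> k0 mF tF mA mB Fk.
have mFA i : measurable (F i `\` A) by exact: measurableD.
have mFB i : measurable (F i `&` B) by exact: measurableI.
rewrite measure_bigcup //.
apply: (@le_trans _ _ (\sum_(i <oo | i \in P) k%:E * (m (F i `\` A) + m (F i `&` B)))).
  by apply: lee_nneseries => [i _ _|i /set_mem /Fk //]; exact: measure_ge0.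
rewrite nneseriesZl; last by move=> i _; apply: adde_ge0; exact: measure_ge0.
rewrite nneseriesD; try by move=> i _ _; exact: measure_ge0.
apply: lee_wpmul2l; first by rewrite lee_fin.
rewrite -!measure_bigcup //; try by move=> i _.
- apply: leeD; first by rewrite setD_bigcupl.
  apply: le_measure; rewrite ?inE //; last by move=> x [i _ []].
  by apply: bigcup_measurable.
- exact: trivIset_setIr.
- by apply: (@trivIset_setIr _ _ _ _ (fun=> ~` A)).
Qed.

(* Otherwise the good atoms of [A'] would carry at most
   [4 (m (A' \ A) + m B) < 8 c], leaving [m A < 8 c + c + c]. *)
Lemma exists_dense_atom (alpha : nat -> set X) (I good : set nat) (A B : set X)
    (c : R) : mpartition alpha -> measurable A -> measurable B ->
  m (A `\` \bigcup_(i in I) alpha i) < c%:E ->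
  m (\bigcup_(i in I) alpha i `\` A) < c%:E -> m B <= c%:E ->
  (1 - c)%:E < m (\bigcup_(i in good) alpha i) -> (10 * c)%:E <= m A ->
  exists2 i, I i /\ good i &
    4%:E * (m (alpha i `\` A) + m (alpha i `&` B)) < m (alpha i).
Proof.
move=> [malpha alpha_disj _] mA mB AA' A'A Bc goodc Ac.
apply: contrapT => none.
have talpha : trivIset setT alpha.
  move=> i j _ _ [x [xi xj]]; apply: contrapT => ij.
  by have := alpha_disj _ _ ij; rewrite -subset0 => /(_ x); apply.
set A' := \bigcup_(i in I) alpha i; set Gd := \bigcup_(i in good) alpha i.
set UP := \bigcup_(i in [set i | I i /\ good i]) alpha i.
have mbig (J : set nat) : measurable (\bigcup_(i in J) alpha i).
  by apply: bigcup_measurable => i _.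
have UPA' : UP `<=` A' by move=> x [i [Ii _] xi]; exists i.
have UPsmall : m UP <= 4%:E * (m (UP `\` A) + m B).
  apply: measure_bigcup_dominated => //; first exact: sub_trivIset talpha.
  move=> i Pi; rewrite leNgt; apply/negP => lt.
  by apply: none; exists i.
have cover : A `<=` UP `|` (A `\` A') `|` ~` Gd.
  move=> x Ax; have [A'x|] := pselect (A' x); last by left; right.
  have [[j gj xj]|] := pselect (Gd x); last by right.
  left; left; case: A'x => i Ii xi; exists i => //; split => //.
  by rewrite (talpha i j) //; exists x.
have mAA' : measurable (A `\` A') := measurableD mA (mbig I).
have mUPA : measurable (UP `\` A) := measurableD (mbig _) mA.
have mA'A : measurable (A' `\` A) := measurableD (mbig I) mA.
have mGdC : measurable (~` Gd) := measurableC (mbig good).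
have mUPAA' : measurable (UP `|` (A `\` A')) := measurableU _ _ (mbig _) mAA'.
have UPAle : m (UP `\` A) <= m (A' `\` A).
  by apply: le_measure; rewrite ?inE // => x [/UPA' ? ?].
have Ale : m A <= m UP + m (A `\` A') + m (~` Gd).
  apply: le_trans (le_measure m (mem_set mA) _ cover) _.
    by rewrite inE; apply: measurableU mUPAA' mGdC.
  apply: le_trans (measureU2 m mUPAA' mGdC) _.
  exact: leeD2r (measureU2 m (mbig _) mAA').
move: Ale UPsmall UPAle AA' A'A Bc goodc Ac.
rewrite (probability_setC _ (mbig _)) (finite_measureE _ mA).
rewrite (finite_measureE _ (mbig _)).
rewrite (finite_measureE _ mAA') (finite_measureE _ mUPA) (finite_measureE _ mA'A).
rewrite (finite_measureE _ (mbig good)) (finite_measureE _ mB).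
rewrite -!EFinD -!EFinM !lee_fin !lte_fin; lra.
Qed.

End DenseAtom.

Section CoboundarySeries.
Context d (X : measurableType d) (R : realType) (m : probability X R) (T : X -> X).
Context (G : zmodType) (nrm : G -> R) (N : nat -> nat) (eps : nat -> R).
Context (f : nat -> X -> G).
Hypotheses (nrm_norm : is_group_norm nrm) (nrm_sc : nsecond_countable nrm)
  (nrm_lc : nlocally_compact nrm) (mT : measurable_fun setT T)
  (mpT : forall A, measurable A -> m (T @^-1` A) = m A)
  (N_gt0 : forall k, (0 < N k)%N) (N_homo : {homo N : a b / (a <= b)%N})
  (eps_gt0 : forall k, 0 < eps k) (eps_fin : (\sum_(0 <= k <oo) (eps k)%:E < +oo)%E)
  (mf : forall k, nmeasurable nrm (f k)).

Definition cobd k x := f k (T x) - f k x.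
Definition cobd_sum n x := \sum_(k < n) cobd k x.
Definition bad_set j := [set x | eps j / (N j)%:R <= nrm (cobd j.+1 x)].

Hypothesis bad_set_small :
  forall j, (m (bad_set j) <= (eps j ^+ 2 / (N j)%:R)%:E)%E.

Let eps_ge0 k : 0 <= eps k. Proof. exact: ltW. Qed.

Let eps_sum := fine (\sum_(0 <= k <oo) (eps k)%:E).

Let eps_le_sum k : eps k <= eps_sum.
Proof. by have := sum_le_fine_nneseries eps_ge0 eps_fin k k.+1; rewrite big_nat1. Qed.

Let div_N_le k (x : R) : 0 <= x -> x / (N k)%:R <= x.
Proof.
move=> x0; rewrite ler_pdivrMr ?ltr0n // ler_peMr //.
by rewrite (_ : 1 = 1%:R) // ler_nat N_gt0.
Qed.

Lemma nmeasurable_cobd k : nmeasurable nrm (cobd k).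
Proof. exact/nmeasurableB/mf/nmeasurable_comp. Qed.

Lemma nmeasurable_cobd_sum n : nmeasurable nrm (cobd_sum n).
Proof. exact/nmeasurable_sum/nmeasurable_cobd. Qed.

Lemma measurable_bad_set j : measurable (bad_set j).
Proof. exact/(measurable_nrm_ge nrm_norm)/nmeasurable_cobd. Qed.

Lemma cobd_sumSB x p q : (p <= q)%N ->
  cobd_sum q.+1 x - cobd_sum p.+1 x = \sum_(p <= j < q) cobd j.+1 x.
Proof.
move=> pq; rewrite /cobd_sum !big_ord_recl.
rewrite -!(big_mkord xpredT (fun j => cobd (bump 0 j) x)) (big_cat_nat (leq0n p) pq).
by rewrite /= opprD addrACA subrr add0r addrAC subrr add0r.
Qed.

Lemma cobd_sum_tail_le x p q :
  (forall j, (p <= j)%N -> nrm (cobd j.+1 x) < eps j / (N j)%:R) -> (p <= q)%N ->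
  nrm (cobd_sum q.+1 x - cobd_sum p.+1 x) <= (\sum_(p <= j < q) eps j) / (N p)%:R.
Proof.
move=> good pq; rewrite cobd_sumSB // mulr_suml.
apply: le_trans (nrm_sum nrm_norm _ _) _; apply: ler_sum_nat => j /andP [pj _].
apply: le_trans (ltW (good j pj)) _; apply: ler_wpM2l => //.
by rewrite lef_pV2 ?posrE ?ltr0n // ler_nat N_homo.
Qed.

Definition bad_limsup := lim_sup_set bad_set.

Lemma measurable_bad_limsup : measurable bad_limsup.
Proof.
apply: bigcap_measurableType => n _; apply: bigcup_measurable => j _.
exact: measurable_bad_set.
Qed.

(* Borel--Cantelli: [m (bad_set j) <= eps j ^+ 2 / N j <= eps_sum * eps j] is
   summable. *)
Lemma measure_bad_limsup : m bad_limsup = 0%E.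
Proof.
apply: lim_sup_set_cvg0; first exact: measurable_bad_set.
apply: le_lt_trans (_ : _ <= (eps_sum * eps_sum)%:E)%E _; last by rewrite ltry.
apply: (@le_trans _ _ (\sum_(0 <= n <oo) (eps_sum * eps n)%:E)%E).
  apply: lee_nneseries => [n _ _|n _]; first exact: measure_ge0.
  apply: le_trans (bad_set_small n) _; rewrite lee_fin.
  apply: le_trans (div_N_le _ _) _; first exact: exprn_ge0.
  by rewrite expr2 ler_wpM2r.
have eps_sum_ge0 : 0 <= eps_sum := le_trans (eps_ge0 0) (eps_le_sum 0).
apply: nneseries_le_bound => [n|M]; first by rewrite mulr_ge0.
by rewrite -mulr_sumr ler_wpM2l ?sum_le_fine_nneseries.
Qed.

Lemma not_bad_limsup x : ~ bad_limsup x ->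
  exists n, forall j, (n <= j)%N -> nrm (cobd j.+1 x) < eps j / (N j)%:R.
Proof.
move=> /existsNP [n nbad]; exists n => j nj; rewrite ltNge; apply/negP => bad.
by apply: nbad => //; exists j.
Qed.

Lemma cobd_summable x : ~ bad_limsup x ->
  (\sum_(0 <= k <oo) (nrm (cobd k x))%:E < +oo)%E.
Proof.
move=> /not_bad_limsup [n good].
have nrm_ge0 k : 0 <= nrm (cobd k x) by exact: nrm_ge0.
set B := \sum_(0 <= k < n.+1) nrm (cobd k x) + eps_sum.
have partial_le M : \sum_(0 <= k < M) nrm (cobd k x) <= B.
  have [Mn|nM] := leqP M n.+1.
    rewrite /B (big_cat_nat (leq0n M) Mn) /= -addrA lerDl.
    by rewrite addr_ge0 ?sumr_ge0 // (le_trans _ (eps_le_sum 0)).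
  rewrite (big_cat_nat (leq0n n.+1) (ltnW nM)) lerD2l big_add1 /=.
  apply: le_trans (sum_le_fine_nneseries eps_ge0 eps_fin n M.-1).
  apply: ler_sum_nat => j /andP[nj _]; apply: le_trans (ltW (good j nj)) _.
  exact: div_N_le.
exact: le_lt_trans (nneseries_le_bound nrm_ge0 partial_le) (ltry _).
Qed.

Lemma cobd_sum_cvg x : ~ bad_limsup x ->
  exists l, nconverges nrm (cobd_sum^~ x) l.
Proof.
move=> /not_bad_limsup [n good].
have [l Hl] : exists l, nconverges nrm (fun p => cobd_sum p.+1 x) l.
  apply: (ncauchy_nconverges nrm_norm nrm_lc) => e e0.
  have [n1 Hn1] := nneseries_tail_lt eps_ge0 eps_fin e0.
  exists (maxn n n1) => p q /andP[np pq].
  apply: le_lt_trans (cobd_sum_tail_le _ pq) _.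
    by move=> j pj; apply: good; rewrite (leq_trans _ pj) // (leq_trans _ np) ?leq_maxl.
  apply: le_lt_trans (div_N_le _ _) _; first exact: sumr_ge0.
  by apply: Hn1; exact: leq_trans (leq_maxr _ _) np.
exists l => e e0; have [n1 H1] := Hl e e0; exists n1.+1 => -[//|k].
exact: H1.
Qed.

Lemma ae_cobd_summable :
  {ae m, forall x, (\sum_(0 <= k <oo) (nrm (cobd k x))%:E < +oo)%E}.
Proof.
exists bad_limsup; split; [exact: measurable_bad_limsup|exact: measure_bad_limsup|].
by move=> x /= sx; apply: contrapT => nbad; exact/sx/cobd_summable.
Qed.

Lemma exists_nmeasurable_limit : exists phi : X -> G, nmeasurable nrm phi /\
  {ae m, forall x, nconverges nrm (cobd_sum^~ x) (phi x)}.
Proof.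
pose L x := xget 0 [set l | nconverges nrm (cobd_sum^~ x) l].
have cvL x : ~ bad_limsup x -> nconverges nrm (cobd_sum^~ x) (L x).
  by move=> nbad; exact: (xgetPex 0 (cobd_sum_cvg nbad)).
exists (fun x => if pselect (bad_limsup x) then 0 else L x); split.
  exact: (nmeasurable_lim nrm_norm nmeasurable_cobd_sum measurable_bad_limsup cvL).
exists bad_limsup; split; [exact: measurable_bad_limsup|exact: measure_bad_limsup|].
move=> x /= ncv; apply: contrapT => nbad; apply: ncv.
by case: (pselect (bad_limsup x)) => [|_ /=]; [|exact: cvL].
Qed.

Definition far_bad_set k := \bigcup_(j in [set j | (k <= j)%N]) bad_set j.

Lemma measurable_far_bad_set k : measurable (far_bad_set k).
Proof. by apply: bigcup_measurable => j _; exact: measurable_bad_set. Qed.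

Lemma measure_far_bad_set_le k eta : (forall q, \sum_(k <= j < q) eps j <= eta) ->
  (forall j, (k <= j)%N -> eps j <= 1) ->
  (m (far_bad_set k) <= (eta / (N k)%:R)%:E)%E.
Proof.
move=> tail eps1; apply: le_trans.
  apply: (@measure_sigma_subadditive_tail _ _ _ m _ _ k measurable_bad_set).
    exact: measurable_far_bad_set.
  by move=> x [j /= kj bj]; exists j => //= jk; lia.
apply: le_trans.
  by apply: (lee_nneseries (v := fun j => (eps j ^+ 2 / (N j)%:R)%:E)%E) => j *;
    [exact: measure_ge0|exact: bad_set_small].
apply: nneseries_le_bound => [j|M]; first by rewrite divr_ge0 ?exprn_ge0.
apply: le_trans (_ : \sum_(k <= j < M) eps j / (N k)%:R <= _); last first.
  by rewrite -mulr_suml ler_wpM2r ?invr_ge0.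
apply: ler_sum_nat => j /andP[kj _]; rewrite ler_pM ?exprn_ge0 ?invr_ge0 //.
  by rewrite expr2 ler_piMr ?eps1.
by rewrite lef_pV2 ?posrE ?ltr0n // ler_nat N_homo.
Qed.

Definition exceptional_set (Z : set X) k :=
  \bigcup_(i in `I_(N k)) (iter i T @^-1` far_bad_set k) `|`
  \bigcup_i (iter i T @^-1` Z).

Lemma measurable_exceptional_set Z k : measurable Z ->
  measurable (exceptional_set Z k).
Proof.
move=> mZ; apply: measurableU; apply: bigcup_measurable => i _;
  apply: (measurable_iter_preimage mT) => //; exact: measurable_far_bad_set.
Qed.

Lemma measure_exceptional_set_le Z k eta : measurable Z -> m Z = 0%E ->
  (forall q, \sum_(k <= j < q) eps j <= eta) ->
  (forall j, (k <= j)%N -> eps j <= 1) -> (m (exceptional_set Z k) <= eta%:E)%E.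
Proof.
move=> mZ Z0 tail eps1; have mfar := measurable_far_bad_set k.
have mseg : measurable (\bigcup_(i in `I_(N k)) (iter i T @^-1` far_bad_set k)).
  by apply: bigcup_measurable => i _; exact: measurable_iter_preimage.
have morb : measurable (\bigcup_i (iter i T @^-1` Z)).
  by apply: bigcup_measurable => i _; exact: measurable_iter_preimage.
apply: le_trans (measureU2 m mseg morb) (_ : m _ + m _ <= _)%E.
rewrite (measure_orbit_null mT mpT mZ Z0) adde0.
have far_le := measure_far_bad_set_le tail eps1.
apply: le_trans (measure_orbit_segment_le mT mpT _ mfar far_le) _.
by rewrite lee_fin -(mulr_natr (eta / _)) divfK // pnatr_eq0 -lt0n N_gt0.
Qed.

Lemma limit_cobd_sum_close (phi : X -> G) k y eta :
  nconverges nrm (cobd_sum^~ y) (phi y) ->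
  (forall j, (k <= j)%N -> nrm (cobd j.+1 y) < eps j / (N j)%:R) ->
  (forall q, \sum_(k <= j < q) eps j <= eta) ->
  nrm (phi y - cobd_sum k.+1 y) <= eta / (N k)%:R.
Proof.
move=> cv good tail; apply/ler_addgt0Pr => e e0.
have [n1 Hn1] := cv e e0; set q := maxn k n1.
have close_q : nrm (phi y - cobd_sum q.+1 y) < e.
  by rewrite nrm_distC // Hn1 // (leq_trans (leq_maxr k n1)).
apply: le_trans (nrm_distD nrm_norm _ (cobd_sum q.+1 y) _) _.
rewrite addrC; apply: lerD _ (ltW close_q).
apply: le_trans (cobd_sum_tail_le good (leq_maxl k n1)) _.
by rewrite ler_wpM2r ?invr_ge0.
Qed.

Lemma cocycle_limit_close (phi : X -> G) (Z : set X) k n x eta :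
  (forall y, ~ Z y -> nconverges nrm (cobd_sum^~ y) (phi y)) ->
  (forall q, \sum_(k <= j < q) eps j <= eta) -> 0 <= eta -> (n <= N k)%N ->
  ~ exceptional_set Z k x ->
  nrm (cocycle T phi n x - cocycle T (cobd_sum k.+1) n x) <= eta.
Proof.
move=> cv tail eta0 nN nexc; rewrite /cocycle -sumrB.
apply: le_trans (nrm_sum nrm_norm _ _) _.
apply: le_trans (_ : \sum_(i < n) eta / (N k)%:R <= _); last first.
  rewrite sumr_const card_ord -(mulr_natr (eta / _)) mulrAC ler_pdivrMr ?ltr0n //.
  by rewrite ler_wpM2l ?ler_nat.
apply: ler_sum => i _; apply: limit_cobd_sum_close tail.
  by apply: cv => Zi; apply: nexc; right; exists i.
move=> j kj; rewrite ltNge; apply/negP => bad; apply: nexc; left.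
by exists i; [exact: leq_trans (ltn_ord i) nN|exists j].
Qed.

Variables (g : G) (alpha : nat -> nat -> set X).
Hypotheses (alpha_part : forall k, mpartition (alpha k))
  (alpha_gen : approx_generate m alpha)
  (evc : forall k,
     EVC m T (cobd_sum k.+1) (nball nrm g (eps k)) (eps k) (alpha k) (N k)).

Lemma exists_returning_set k (A Z : set X) (c : R) :
  measurable A -> measurable Z -> m Z = 0%E ->
  (forall q, \sum_(k <= j < q) eps j <= c) -> c <= 1 / 2 -> ((10 * c)%:E <= m A)%E ->
  (exists A', partition_algebra (alpha k) A' /\
              (m ((A `\` A') `|` (A' `\` A)) < c%:E)%E) ->
  exists n (Y : set X), [/\ (0 < n <= N k)%N, measurable Y, (0 < m Y)%E &
    Y `<=` [set x | [/\ A x, A (iter n T x), ~ exceptional_set Z k x &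
                       nball nrm g (eps k) (cocycle T (cobd_sum k.+1) n x)]]].
Proof.
move=> mA mZ Z0 tail c12 A10c [A' [[I [_ ->]] AA']].
have eps_le j : (k <= j)%N -> eps j <= c.
  move=> kj; apply: le_trans (tail j.+1).
  by rewrite (big_cat_nat kj) //= big_nat1 lerDr sumr_ge0.
have eps1 j : (k <= j)%N -> eps j <= 1.
  by move=> kj; apply: le_trans (eps_le j kj) (le_trans c12 _); lra.
set B := exceptional_set Z k.
have mB : measurable B := measurable_exceptional_set k mZ.
have Bc : (m B <= c%:E)%E := measure_exceptional_set_le mZ Z0 tail eps1.
have [malpha _ _] := alpha_part k.
have mA' : measurable (\bigcup_(i in I) alpha k i) by exact: bigcup_measurable.
have mAA' := measurableD mA mA'; have mA'A := measurableD mA' mA.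
have mAA'A := measurableU _ _ mAA' mA'A.
have AA'c : (m (A `\` \bigcup_(i in I) alpha k i) < c%:E)%E.
  by apply: le_lt_trans AA'; apply: le_measure; rewrite ?inE // => x; left.
have A'Ac : (m (\bigcup_(i in I) alpha k i `\` A) < c%:E)%E.
  by apply: le_lt_trans AA'; apply: le_measure; rewrite ?inE // => x; right.
have c_eps : ((1 - c)%:E <= (1 - eps k)%:E)%E by rewrite lee_fin lerB // eps_le.
have goodc := evc k; rewrite /EVC /= in goodc.
have [i [_ goodi] dense] :=
  exists_dense_atom (alpha_part k) mA mB AA'c A'Ac Bc (le_lt_trans c_eps goodc) A10c.
have [D [psi [ptD [psiN [_ [RDa [Dg aD]]]]]]] := goodi.
have epsk12 : eps k <= 1 / 2 by apply: le_trans (eps_le k (leqnn k)) c12.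
have [n [Y [n0 mY Y0 Yret]]] :=
  ptransf_return_level mT ptD (malpha i) mA mB RDa aD epsk12 dense.
have [y Yy] : Y !=set0.
  by apply/set0P/negP => /eqP Yempty; move: Y0; rewrite Yempty measure0 ltxx.
have [Dy psiy _ _ _] := Yret y Yy.
exists n, Y; split => // [|x /Yret [Dx <- Ax ARx nBx]]; first by rewrite n0 -psiy psiN.
by split => //; exact: Dg.
Qed.

Lemma essential_value_limit (phi : X -> G) : nmeasurable nrm phi ->
  {ae m, forall x, nconverges nrm (cobd_sum^~ x) (phi x)} ->
  essential_value m T nrm phi g.
Proof.
move=> mphi [Z [mZ Z0 HZ]] A mA A0 U oU Ug.
have cv y : ~ Z y -> nconverges nrm (cobd_sum^~ y) (phi y).
  by move=> nZy; apply: contrapT => ncv; exact/nZy/HZ.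
have [r r0 gU] := oU g Ug.
have mA0 : 0 < fine (m A) by rewrite -lte_fin -(finite_measureE _ mA).
set c := Order.min (r / 2) (Order.min (fine (m A) / 10) (1 / 2)).
have c0 : 0 < c by rewrite !lt_min !divr_gt0.
have [cr cA c12] : [/\ c <= r / 2, c <= fine (m A) / 10 & c <= 1 / 2].
  by split; rewrite !ge_min lexx ?orbT.
have A10c : ((10 * c)%:E <= m A)%E.
  by rewrite (finite_measureE _ mA) lee_fin; lra.
have [k1 Hk1] := nneseries_tail_lt eps_ge0 eps_fin c0.
have [k0 Hk0] := alpha_gen mA c0; set k := maxn k1 k0.
have tail q : \sum_(k <= j < q) eps j <= c by apply/ltW/Hk1/leq_maxl.
have [n [Y [/andP[n0 nN] mY Y0 Yret]]] :=
  exists_returning_set mA mZ Z0 tail c12 A10c (Hk0 k (leq_maxr _ _)).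
exists n => //; apply: lt_le_trans Y0 _; apply: le_measure; rewrite ?inE //.
  apply: measurableI; first exact/measurableI/(measurable_iter_preimage mT).
  exact: (nmeasurable_cocycle nrm_norm nrm_sc n mT mphi oU).
move=> x /Yret [Ax ARx nBx coc_s]; split => //; apply: gU; rewrite /nball /=.
have coc_phi := cocycle_limit_close cv tail (ltW c0) nN nBx.
have epsk : eps k < c by have := Hk1 k k.+1 (leq_maxl _ _); rewrite big_nat1.
move: coc_s; rewrite /nball /= => coc_s.
have := nrm_distD nrm_norm (cocycle T phi n x) (cocycle T (cobd_sum k.+1) n x) g.
lra.
Qed.

End CoboundarySeries.

Theorem theorem3p6 (d : measure_display) (X : measurableType d)
  (R : realType) (m : probability X R) (T : X -> X)
  (G : zmodType) (nrm : G -> R) (g : G)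
  (alpha : nat -> nat -> set X) (N : nat -> nat) (eps : nat -> R)
  (f : nat -> X -> G) :
  standard_borel X R ->
  invertible_mpt m T -> ergodic m T ->
  lcsc_normed_group nrm ->
  (forall k, mpartition (alpha k)) -> approx_generate m alpha ->
  (forall k, (0 < N k)%N) -> {homo N : a b / (a <= b)%N} ->
  (forall M, exists k, (M <= N k)%N) ->
  (forall k, 0 < eps k) -> (\sum_(0 <= k <oo) (eps k)%:E < +oo)%E ->
  (forall k, nmeasurable nrm (f k)) ->
  (forall k, EVC m T (fun x => \sum_(j < k.+1) (f j (T x) - f j x))
                 (nball nrm g (eps k)) (eps k) (alpha k) (N k)) ->
  (forall k, (m [set x | (eps k / (N k)%:R <= nrm (f k.+1 (T x) - f k.+1 x))%R]
              <= (eps k ^+ 2 / (N k)%:R)%:E)%E) ->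
  {ae m, forall x, (\sum_(0 <= k <oo) (nrm (f k (T x) - f k x))%:E < +oo)%E}
  /\ (exists phi : X -> G, nmeasurable nrm phi /\
        {ae m, forall x, nconverges nrm
                 (fun n => \sum_(k < n) (f k (T x) - f k x)) (phi x)})
  /\ (forall phi : X -> G, nmeasurable nrm phi ->
        {ae m, forall x, nconverges nrm
                 (fun n => \sum_(k < n) (f k (T x) - f k x)) (phi x)} ->
        essential_value m T nrm phi g).
Proof.
move=> _ [mT _ mpT] _ [nrm_norm nrm_lc nrm_sc] alpha_part alpha_gen N_gt0 N_homo _
  eps_gt0 eps_fin mf evc bad_small.
split; [|split].
- exact: ae_cobd_summable.
- exact: exists_nmeasurable_limit.
- by move=> phi; apply: essential_value_limit.
Qed.
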